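(* Let $\mathfrak{n}$ be a $2$-step nilpotent real Lie algebra with center $\mathfrak{z}$ and commutator $\mathfrak{n}'$, and let $J$ be a linear map with $J^2=-I$ and $J\mathfrak{n}'\subset\mathfrak{z}$. Let $\langle\cdot,\cdot\rangle$ be a $J$-compatible inner product, $\mathfrak{z}_0=\mathfrak{n}'+J\mathfrak{n}'$, $\mathfrak{v}=\mathfrak{z}_0^{\perp}$, $J_{\mathfrak{v}}=J|_{\mathfrak{v}}$, $\dim\mathfrak{v}=2n$, and $j:\mathfrak{z}_0\to\mathfrak{so}(\mathfrak{v})$ defined by $\langle j(z)v,w\rangle=\langle z,[v,w]\rangle$. Put $\mathfrak{n}'_J=\mathfrak{n}'\cap J\mathfrak{n}'$, let $\mathfrak{z}_1$ be the orthogonal complement of $\mathfrak{n}'_J$ in $\mathfrak{n}'$ (so that $J\mathfrak{z}_1\perp\mathfrak{n}'$), and let $\mathfrak{b}\subset\mathfrak{n}'_J$ be any subspace with orthogonal decomposition $\mathfrak{n}'_J=\mathfrak{b}\oplus J\mathfrak{b}$. The following are equivalent: (i) $J$ is integrable; (ii) $j(z)\in\mathfrak{u}(n)$ for all $z\in\mathfrak{z}_1$, and $j(Jz)-\tfrac12[J_{\mathfrak{v}},j(z)]\in\mathfrak{u}(n)$ for all $z\in\mathfrak{b}$; (iii) $j(z)\in\mathfrak{u}(n)$ for all $z\in\mathfrak{z}_1$, and $j(Jz)_-=\tfrac12[J_{\mathfrak{v}},j(z)]$ for all $z\in\mathfrak{b}$.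
   Context: $J$ integrable means $N_J(x,y)=[x,y]+J([Jx,y]+[x,Jy])-[Jx,Jy]=0$ for all $x,y$. $\mathfrak{u}(n)=\{T\in\mathfrak{so}(\mathfrak{v}): T J_{\mathfrak{v}}=J_{\mathfrak{v}}T\}$. For $T\in\operatorname{End}(\mathfrak{v})$, $T_{\pm}=\tfrac12(T\mp J_{\mathfrak{v}}TJ_{\mathfrak{v}})$, so $T=T_++T_-$ with $T_+$ commuting and $T_-$ anticommuting with $J_{\mathfrak{v}}$. $[A,B]=AB-BA$. A Lie algebra $\mathfrak{n}$ is $2$-step nilpotent if it is non-abelian and $\mathfrak{n}'\subset\mathfrak{z}$. *)

From HB Require Import structures.
From mathcomp Require Import all_boot all_order all_algebra.
From mathcomp Require Import reals.
From Stdlib Require Import ClassicalEpsilon.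
Set Implicit Arguments. Unset Strict Implicit. Unset Printing Implicit Defensive.
Import Order.TTheory GRing.Theory Num.Theory.
Local Open Scope ring_scope.

Section LieDefs.
Variables (R : realType) (V : vectType R).
Variables (br : V -> V -> V) (J : V -> V) (ip : V -> V -> R).

Definition lie_bracket : Prop :=
  [/\ forall (a : R) x y z, br (a *: x + y) z = a *: br x z + br y z,
      forall x y, br x y = - br y x &
      forall x y z, br x (br y z) + br y (br z x) + br z (br x y) = 0].

Definition almost_complex : Prop :=
  (forall (a : R) x y, J (a *: x + y) = a *: J x + J y) /\ (forall x, J (J x) = - x).

Definition inner_product : Prop :=
  [/\ forall (a : R) x y z, ip (a *: x + y) z = a * ip x z + ip y z,
      forall x y, ip x y = ip y x &
      forall x, x != 0 -> 0 < ip x x].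

Definition J_compatible : Prop := forall x y, ip (J x) (J y) = ip x y.

Definition comm (x : V) : Prop :=
  exists s : seq (V * V), x = \sum_(p <- s) br p.1 p.2.

Definition center (x : V) : Prop := forall y, br x y = 0.

Definition two_step_nilpotent : Prop :=
  (exists x y, br x y != 0) /\ (forall x, comm x -> center x).

Definition z0 (x : V) : Prop := exists a b, [/\ comm a, comm b & x = a + J b].

Definition vpart (x : V) : Prop := forall y, z0 y -> ip x y = 0.

Definition nJ (x : V) : Prop := comm x /\ exists y, comm y /\ x = J y.

Definition z1 (x : V) : Prop := comm x /\ forall y, nJ y -> ip x y = 0.

Definition j_spec (z v u : V) : Prop :=
  vpart u /\ forall w, vpart w -> ip u w = ip z (br v w).

Definition jmap (z v : V) : V := epsilon (inhabits 0) (j_spec z v).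

(* T (an endomorphism of v, given by its values on v) lies in u(n):
   T maps v to v, is skew-symmetric on v, and commutes with J_v *)
Definition in_u (T : V -> V) : Prop :=
  [/\ forall v, vpart v -> vpart (T v),
      forall v w, vpart v -> vpart w -> ip (T v) w = - ip v (T w) &
      forall v, vpart v -> T (J v) = J (T v)].

Definition commJ (T : V -> V) (v : V) : V := J (T v) - T (J v).

Definition minus_part (T : V -> V) (v : V) : V := 2^-1 *: (T v + J (T (J v))).

Definition integrable : Prop :=
  forall x y, br x y + J (br (J x) y + br x (J y)) - br (J x) (J y) = 0.

End LieDefs.

From HB Require Import structures.
From mathcomp Require Import all_boot all_order all_algebra.
From mathcomp Require Import reals.
From Stdlib Require Import ClassicalEpsilon.
From mathcomp Require Import ring lra.
Import Order.TTheory GRing.Theory Num.Theory.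
Local Open Scope ring_scope.
Set Implicit Arguments. Unset Strict Implicit. Unset Printing Implicit Defensive.

(** With ω_z(v, w) = <z, [v, w]>, pairing the Nijenhuis tensor with z gives
    <z, N(v, w)> = (ω_z(v, w) - ω_z(Jv, Jw)) - (ω_Jz(Jv, w) + ω_Jz(v, Jw)),
    and for v, w in v the two brackets are 2<j(z)_- v, w> and <[j(z), J] v, w>.
    Since z0 = n' + J n' is central, N(x, y) depends only on the v-components
    of x and y and lies in z0, so J is integrable iff every z in n' is
    orthogonal to N(v, v).  This condition is invariant under J, so on
    n'_J = b + J b it is (ii) or (iii) for z in b; on z1 it is j(z) in u(n).
    Let T = P J on n', P the orthogonal projection onto n'; T is skew-adjoint
    and ω_Jz = ω_Tz.  If j(z)_- = 0 for z in z1 then z1 is orthogonal to N,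
    because T maps z1 into z1.  Conversely, if n' is orthogonal to N then
    ω_y(v, w) - ω_y(Jv, Jw) changes sign under y -> T^2 y, so j(z)_- = 0 on the
    image of I + T^2 = I - T^*T; this self-adjoint map on n' has kernel n'_J,
    hence image z1. *)

Section Subspaces.
Variables (K : fieldType) (V : vectType K).

Definition is_subspace (P : V -> Prop) :=
  exists U : {vspace V}, forall x, P x <-> x \in U.

Section Closure.
Variables (P : V -> Prop) (P_sub : is_subspace P).

Lemma subspaceD x y : P x -> P y -> P (x + y).
Proof. by case: P_sub => U PU; rewrite !PU; apply: memvD. Qed.

Lemma subspaceZ a x : P x -> P (a *: x).
Proof. by case: P_sub => U PU; rewrite !PU; apply: memvZ. Qed.

Lemma subspaceN x : P x -> P (- x).
Proof. by case: P_sub => U PU; rewrite !PU rpredN. Qed.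

Lemma subspaceB x y : P x -> P y -> P (x - y).
Proof. by case: P_sub => U PU; rewrite !PU; apply: memvB. Qed.

End Closure.

Lemma is_subspace_ext (P Q : V -> Prop) :
  (forall x, P x <-> Q x) -> is_subspace P -> is_subspace Q.
Proof. by move=> PQ [U PU]; exists U => x; rewrite -PQ. Qed.

Lemma is_subspace_full : is_subspace (fun _ => True).
Proof. by exists fullv => x; rewrite memvf. Qed.

Lemma is_subspace_cap (P Q : V -> Prop) :
  is_subspace P -> is_subspace Q -> is_subspace (fun x => P x /\ Q x).
Proof.
move=> [U PU] [W QW]; exists (U :&: W)%VS => x.
by rewrite PU QW; split=> /memv_capP.
Qed.

Lemma is_subspace_add (P Q : V -> Prop) :
  is_subspace P -> is_subspace Q ->
  is_subspace (fun x => exists a c, [/\ P a, Q c & x = a + c]).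
Proof.
move=> [U PU] [W QW]; exists (U + W)%VS => x; split.
  by move=> [a [c [/PU Ua /QW Wc ->]]]; apply: memv_add.
by move=> /memv_addP [a /PU Pa [c /QW Qc ->]]; exists a, c.
Qed.

End Subspaces.

Arguments is_subspace_full {K V}.

Section Image.
Variables (K : fieldType) (U W : vectType K) (f : U -> W).
Hypothesis f_lin : linear f.
HB.instance Definition _ := GRing.isLinear.Build K U W *:%R f f_lin.

Lemma is_subspace_image (P : U -> Prop) :
  is_subspace P -> is_subspace (fun x => exists y, P y /\ x = f y).
Proof.
move=> [S PS]; exists (linfun f @: S)%VS => x; split.
  by move=> [y [/PS Sy ->]]; rewrite -lfunE memv_img.
by move=> /memv_imgP [y /PS Py ->]; exists y; rewrite lfunE.
Qed.

End Image.

Lemma inner_product_bilinear (R : realType) (V : vectType R) (ip : V -> V -> R) :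
  inner_product ip -> bilinear_for *%R *%R ip.
Proof.
case=> ipl ipC _; split=> u a x y; first exact: ipl.
by rewrite ipC ipl !(ipC u).
Qed.

Lemma lie_bracket_bilinear (R : realType) (V : vectType R) (br : V -> V -> V) :
  lie_bracket br -> bilinear_for *:%R *:%R br.
Proof.
case=> brl brC _; split=> u a x y; first exact: brl.
by rewrite brC brl (brC u x) (brC u y) opprD -scalerN.
Qed.

Section InnerProductSpace.
Variables (R : realType) (V : vectType R) (ip : V -> V -> R).
Hypothesis ip_inner : inner_product ip.
HB.instance Definition _ :=
  bilinear_isBilinear.Build R V V R *%R *%R ip (inner_product_bilinear ip_inner).

Lemma ipC x y : ip x y = ip y x.
Proof. by case: ip_inner. Qed.

Lemma ip_eq0 x : ip x x = 0 -> x = 0.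
Proof.
case: ip_inner => _ _ ip_gt0 xx0; apply/eqP; apply: contraT => /ip_gt0.
by rewrite xx0 ltxx.
Qed.

Lemma ip_scalar x : scalar (ip x).
Proof. by move=> a y z; rewrite linearPr. Qed.

Definition orth (P : V -> Prop) (x : V) := forall y, P y -> ip x y = 0.

Lemma orth_eq0 (P : V -> Prop) x : P x -> orth P x -> x = 0.
Proof. by move=> Px /(_ x Px) /ip_eq0. Qed.

Lemma orth_eq (P : V -> Prop) x y : orth P x -> orth P y ->
  (forall w, orth P w -> ip x w = ip y w) -> x = y.
Proof.
move=> Px Py xy; apply/eqP; rewrite -subr_eq0; apply/eqP/ip_eq0.
have Pxy : orth P (x - y) by move=> c Pc; rewrite linearBl /= Px // Py // subrr.
by rewrite linearBl /= xy // subrr.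
Qed.

Lemma riesz_span (s : seq V) (f : V -> R) : scalar f ->
  exists2 u, u \in <<s>>%VS & forall w, w \in <<s>>%VS -> ip u w = f w.
Proof.
elim: s f => [|x s IHs] f f_lin.
  have f0 : f 0 = 0.
    have := f_lin 1 0 0; rewrite scale1r addr0 mul1r => f00.
    by apply: (addrI (f 0)); rewrite addr0 -f00.
  exists 0 => [|w]; rewrite ?mem0v // span_nil memv0 => /eqP ->.
  by rewrite linear0l f0.
have [u' su' u'f] := IHs f f_lin.
have [p sp px] := IHs (ip x) (ip_scalar x).
pose d := x - p; pose u := u' + (f x - ip u' x) / ip d d *: d.
have d_orth w : w \in <<s>>%VS -> ip d w = 0.
  by move=> sw; rewrite linearBl /= px // ipC subrr.
have us w : w \in <<s>>%VS -> ip u w = f w.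
  by move=> sw; rewrite linearDl linearZl_LR /= (d_orth w sw) mulr0 addr0 u'f.
have ux : ip u x = f x.
  have [d0|dN0] := eqVneq d 0.
    by rewrite us; have -> : x = p by apply/eqP; rewrite -subr_eq0 -/d d0.
  have dx : ip d x = ip d d.
    by rewrite -[in LHS](subrK p x) linearDr /= (d_orth p sp) addr0.
  rewrite linearDl linearZl_LR /= dx -mulrA mulVf ?mulr1 ?subrKC //.
  by apply: contraNneq dN0 => /ip_eq0 ->.
exists u => [|w].
  have ss : (<<s>> <= <<x :: s>>)%VS by rewrite span_cons addvSr.
  have sx : x \in <<x :: s>>%VS by rewrite memv_span ?mem_head.
  by rewrite memvD ?memvZ ?memvB // (subvP ss).
rewrite span_cons => /memv_addP [xk /vlineP [k ->] [w' sw' ->]].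
by rewrite linearDr linearZ /= ux us // f_lin.
Qed.

Lemma riesz (P : V -> Prop) (f : V -> R) : is_subspace P -> scalar f ->
  exists u, P u /\ forall w, P w -> ip u w = f w.
Proof.
move=> [U PU] f_lin; have [u Uu uf] := riesz_span (vbasis U) f_lin.
rewrite (span_basis (vbasisP U)) in Uu uf.
by exists u; split=> [|w /PU]; [apply/PU | apply: uf].
Qed.

Definition proj (P : V -> Prop) (y : V) : V :=
  epsilon (inhabits 0) (fun p => P p /\ forall w, P w -> ip p w = ip y w).

Section Projection.
Variables (P : V -> Prop) (P_sub : is_subspace P).

Lemma projP y : P (proj P y) /\ forall w, P w -> ip (proj P y) w = ip y w.
Proof. exact: (epsilon_spec (inhabits 0) _ (riesz P_sub (ip_scalar y))). Qed.

Lemma proj_mem y : P (proj P y).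
Proof. exact: (projP y).1. Qed.

Lemma ip_proj y w : P w -> ip (proj P y) w = ip y w.
Proof. exact: (projP y).2. Qed.

Lemma orth_subr_proj y : orth P (y - proj P y).
Proof. by move=> w Pw; rewrite linearBl /= ip_proj // subrr. Qed.

Lemma proj_linear : linear (proj P).
Proof.
move=> a x y; apply/eqP; rewrite -subr_eq0; apply/eqP.
apply: (orth_eq0 (P := P)) => [|w Pw].
  apply: (subspaceB P_sub); first exact: proj_mem.
  by apply: (subspaceD P_sub); [apply: (subspaceZ P_sub)|]; apply: proj_mem.
rewrite linearBl linearDl linearZl_LR /= !ip_proj //.
by rewrite linearDl linearZl_LR subrr.
Qed.

Lemma proj_norm_eq y : ip (proj P y) (proj P y) = ip y y -> P y.
Proof.
move=> norm_eq; suff -> : y = proj P y by apply: proj_mem.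
apply/eqP; rewrite -subr_eq0; apply/eqP/ip_eq0.
rewrite linearBr /= (orth_subr_proj y (proj_mem y)) subr0 linearBl /=.
by rewrite [ip (proj P y) y]ipC -(ip_proj y (proj_mem y)) norm_eq subrr.
Qed.

Lemma is_subspace_orth : is_subspace (orth P).
Proof.
have id_sub_proj : linear (fun y => y - proj P y).
  by move=> a x y; rewrite /= proj_linear scalerBr opprD addrACA.
apply: (is_subspace_ext _ (is_subspace_image id_sub_proj is_subspace_full)) => x.
split=> [[y [_ ->]] | ox]; first exact: orth_subr_proj.
exists x; split=> //; suff -> : proj P x = 0 by rewrite subr0.
by apply: (orth_eq0 (proj_mem x)) => w Pw; rewrite ip_proj // ox.
Qed.

Lemma riesz_orth (f : V -> R) : scalar f ->
  exists u, orth P u /\ forall w, orth P w -> ip u w = f w.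
Proof.
move=> f_lin; have [u [_ uf]] := riesz is_subspace_full f_lin.
exists (u - proj P u); split=> [|w ow]; first exact: orth_subr_proj.
by rewrite linearBl /= uf // [ip (proj P u) w]ipC (ow _ (proj_mem u)) subr0.
Qed.

End Projection.

Lemma self_adjoint_image (P : V -> Prop) (M : V -> V) :
  is_subspace P -> linear M -> (forall x, P x -> P (M x)) ->
  (forall x y, P x -> P y -> ip (M x) y = ip x (M y)) ->
  forall z, P z -> orth (fun x => P x /\ M x = 0) z ->
  exists y, P y /\ z = M y.
Proof.
move=> P_sub M_lin M_P M_sym z Pz z_orth.
have im_sub := is_subspace_image M_lin P_sub.
have [[y [Py Ey]] ip_projz] := projP im_sub z.
pose r := z - M y; have Pr : P r by apply: (subspaceB P_sub) => //; apply: M_P.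
have Mr0 : M r = 0.
  apply: (orth_eq0 (M_P r Pr)) => x Px.
  by rewrite M_sym // linearBl /= -Ey ip_projz ?subrr //; exists x.
have r0 : r = 0.
  apply: ip_eq0; rewrite {1}/r linearBl /= (z_orth r (conj Pr Mr0)).
  by rewrite M_sym // Mr0 linear0r subrr.
by exists y; split=> //; apply/eqP; rewrite -subr_eq0 -/r r0.
Qed.

Section TwoStepNilpotent.
Variables (br : V -> V -> V) (J : V -> V).
Hypothesis br_lie : lie_bracket br.
Hypothesis br_2step : two_step_nilpotent br.
Hypothesis J_cplx : almost_complex J.
Hypothesis J_comm_center : forall x, comm br x -> center br (J x).
Hypothesis ip_J : J_compatible J ip.

HB.instance Definition _ :=
  bilinear_isBilinear.Build R V V V *:%R *:%R br (lie_bracket_bilinear br_lie).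
HB.instance Definition _ := GRing.isLinear.Build R V V *:%R J J_cplx.1.

Local Notation comm := (comm br).
Local Notation z0 := (z0 br J).
Local Notation vpart := (vpart br J ip).
Local Notation nJ := (nJ br J).
Local Notation z1 := (z1 br J ip).
Local Notation j := (jmap br J ip).
Local Notation in_u := (in_u br J ip).
Local Notation pc := (proj comm).

Lemma br_antisym x y : br x y = - br y x.
Proof. by case: br_lie. Qed.

Lemma JJ x : J (J x) = - x.
Proof. exact: J_cplx.2. Qed.

Lemma ipJl x y : ip (J x) y = - ip x (J y).
Proof. by rewrite -[in RHS]ip_J JJ linearNr opprK. Qed.

Lemma ipJr x y : ip x (J y) = - ip (J x) y.
Proof. by rewrite ipJl opprK. Qed.

Lemma comm_br x y : comm (br x y).
Proof. by exists [:: (x, y)]; rewrite big_seq1. Qed.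

Lemma comm_central x y : comm x -> br x y = 0.
Proof. by move=> /br_2step.2. Qed.

Lemma is_subspace_comm : is_subspace comm.
Proof.
pose e := vbasis (fullv : {vspace V}).
pose gens := [seq br a c | a <- e, c <- e].
exists <<gens>>%VS => x; split.
  move=> [s ->]; apply: memv_suml => -[p q] _ /=.
  rewrite (coord_vbasis (memvf p)) (coord_vbasis (memvf q)) linear_sumlz.
  apply: memv_suml => i _; rewrite linear_sumr; apply: memv_suml => k _.
  rewrite linearZl_LR linearZ; apply/memvZ/memvZ/memv_span.
  by apply: allpairs_f; apply: mem_nth; rewrite size_tuple.
move=> /(coord_span (X := in_tuple gens)) ->.
elim/big_ind: _ => [|_ _ [s1 ->] [s2 ->]|i _].
- by exists [::]; rewrite big_nil.
- by exists (s1 ++ s2); rewrite big_cat.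
have /allpairsP [[a c] [_ _ ->]] : gens`_i \in gens by apply: mem_nth.
by exists [:: (coord (in_tuple gens) i x *: a, c)]; rewrite big_seq1 linearZl_LR.
Qed.

Lemma is_subspace_z0 : is_subspace z0.
Proof.
apply: (is_subspace_ext _ (is_subspace_add is_subspace_comm
          (is_subspace_image J_cplx.1 is_subspace_comm))) => x.
split=> [[a [c [ca [b [cb ->]] ->]]] | [a [b [ca cb ->]]]]; first by exists a, b.
by exists a, (J b); split=> //; exists b.
Qed.

Lemma z0J x : z0 x -> z0 (J x).
Proof.
move=> [a [b [ca cb ->]]]; exists (- b), a; split=> //.
  exact: (subspaceN is_subspace_comm).
by rewrite linearD /= JJ addrC.
Qed.

Lemma z0_centrall c y : z0 c -> br c y = 0.
Proof.
by move=> [a [b [ca cb ->]]]; rewrite linearDl /= comm_central // J_comm_center // addr0.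
Qed.

Lemma z0_centralr c y : z0 c -> br y c = 0.
Proof. by move=> zc; rewrite br_antisym z0_centrall // oppr0. Qed.

Lemma is_subspace_vpart : is_subspace vpart.
Proof. exact: is_subspace_orth is_subspace_z0. Qed.

Lemma vpartJ x : vpart x -> vpart (J x).
Proof. by move=> vx c zc; rewrite ipJl vx ?oppr0 //; apply: z0J. Qed.

Lemma jmapP z v : vpart (j z v) /\ forall w, vpart w -> ip (j z v) w = ip z (br v w).
Proof.
have f_lin : scalar (fun w => ip z (br v w)) by move=> a x y; rewrite !linearPr.
exact: (epsilon_spec (inhabits 0) _ (riesz_orth is_subspace_z0 f_lin)).
Qed.

Lemma jmap_vpart z v : vpart (j z v).
Proof. exact: (jmapP z v).1. Qed.

Lemma ip_jmap z v w : vpart w -> ip (j z v) w = ip z (br v w).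
Proof. exact: (jmapP z v).2. Qed.

(* For w in vpart, omega_minus z v w = 2 <j(z)_- v, w> and
   omega_comm z v w = <(j(z) J - J j(z)) v, w>. *)
Definition omega_minus z v w := ip z (br v w) - ip z (br (J v) (J w)).
Definition omega_comm z v w := ip z (br (J v) w) + ip z (br v (J w)).

Lemma omega_minusD z z' v w :
  omega_minus (z + z') v w = omega_minus z v w + omega_minus z' v w.
Proof. by rewrite /omega_minus !linearDl /=; ring. Qed.

Lemma omega_minusJ z v w : omega_minus z v (J w) = omega_comm z v w.
Proof.
by rewrite /omega_minus /omega_comm JJ (linearNr br) (linearNr ip) opprK addrC.
Qed.

Lemma omega_minusJJ z v w : omega_minus z v (J (J w)) = - omega_minus z v w.
Proof.
rewrite /omega_minus !JJ (linearN J) !(linearNr br) !(linearNr ip).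
by rewrite opprK opprB addrC.
Qed.

Lemma omega_comm_pc z v w : omega_comm (pc z) v w = omega_comm z v w.
Proof. by rewrite /omega_comm !(ip_proj is_subspace_comm _ (comm_br _ _)). Qed.

Definition nijenhuis x y := br x y + J (br (J x) y + br x (J y)) - br (J x) (J y).

Definition kills_nijenhuis z :=
  forall v w, vpart v -> vpart w -> ip z (nijenhuis v w) = 0.

Lemma ip_nijenhuis z v w :
  ip z (nijenhuis v w) = omega_minus z v w - omega_comm (J z) v w.
Proof.
rewrite /nijenhuis /omega_minus /omega_comm (linearBr ip) (linearDr ip) /= ipJr.
by rewrite (linearDr ip) /=; ring.
Qed.

Lemma ip_J_nijenhuis z v w : ip (J z) (nijenhuis v w) = ip z (nijenhuis (J v) w).
Proof.
rewrite !ip_nijenhuis /omega_minus /omega_comm !JJ.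
by rewrite !(linearNl ip) !(linearNl br) /= !(linearNr ip) /=; ring.
Qed.

Lemma kills_nijenhuisJ z : kills_nijenhuis (J z) <-> kills_nijenhuis z.
Proof.
split=> kz v w vv vw; last by rewrite ip_J_nijenhuis kz //; apply: vpartJ.
have -> : z = - J (J z) by rewrite JJ opprK.
by rewrite (linearNl ip) /= ip_J_nijenhuis kz ?oppr0 //; apply: vpartJ.
Qed.

Lemma kills_nijenhuisD z z' :
  kills_nijenhuis z -> kills_nijenhuis z' -> kills_nijenhuis (z + z').
Proof. by move=> kz kz' v w vv vw; rewrite (linearDl ip) /= kz // kz' // addr0. Qed.

Lemma nijenhuis_z0 x y : z0 (nijenhuis x y).
Proof.
exists (br x y - br (J x) (J y)), (br (J x) y + br x (J y)); split.
- by apply: (subspaceB is_subspace_comm); apply: comm_br.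
- by apply: (subspaceD is_subspace_comm); apply: comm_br.
- by rewrite /nijenhuis addrAC.
Qed.

Lemma nijenhuis_central x y c d :
  z0 c -> z0 d -> nijenhuis (x + c) (y + d) = nijenhuis x y.
Proof.
move=> zc zd; have zJc := z0J zc; have zJd := z0J zd.
rewrite /nijenhuis !linearD /= !(linearDl br) /= !(linearDr br) /=.
rewrite !(z0_centrall _ zc) !(z0_centrall _ zJc).
by rewrite !(z0_centralr _ zd) !(z0_centralr _ zJd) !addr0.
Qed.

Lemma integrable_kills :
  integrable br J <-> forall z, comm z -> kills_nijenhuis z.
Proof.
split=> [int z _ v w _ _ | kills x y]; first by rewrite [nijenhuis v w]int linear0r.
change (nijenhuis x y = 0).
pose vx := x - proj z0 x; pose vy := y - proj z0 y.
have -> : nijenhuis x y = nijenhuis vx vy.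
  by rewrite -(nijenhuis_central vx vy (proj_mem is_subspace_z0 x)
                 (proj_mem is_subspace_z0 y)) !subrK.
have vvx : vpart vx by apply: orth_subr_proj is_subspace_z0 x.
have vvy : vpart vy by apply: orth_subr_proj is_subspace_z0 y.
have [a [b [ca cb Nab]]] := nijenhuis_z0 vx vy.
apply: ip_eq0; rewrite {1}Nab (linearDl ip) /= kills //.
have kJb : kills_nijenhuis (J b) by apply/kills_nijenhuisJ/kills.
by rewrite kJb ?addr0.
Qed.

Lemma commJ_vpart z v : vpart (commJ J (j z) v).
Proof.
by apply: (subspaceB is_subspace_vpart); [apply: vpartJ|]; apply: jmap_vpart.
Qed.

Lemma ip_commJ z v w : vpart w -> ip (commJ J (j z) v) w = - omega_comm z v w.
Proof.
move=> vw; rewrite /commJ (linearBl ip) /= ipJl !ip_jmap //; last exact: vpartJ.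
by rewrite /omega_comm; ring.
Qed.

Lemma in_u_jmap z :
  in_u (j z) <-> forall v w, vpart v -> vpart w -> omega_minus z v w = 0.
Proof.
split=> [[_ _ jJ] v w vv vw | minus0].
  rewrite /omega_minus -!ip_jmap //; last exact: vpartJ.
  by rewrite (jJ v vv) ip_J subrr.
split=> [v _ | v w vv vw | v vv]; first exact: jmap_vpart.
  by rewrite [ip v _]ipC !ip_jmap // [br w v]br_antisym (linearNr ip) opprK.
apply: orth_eq; [exact: jmap_vpart | exact/vpartJ/jmap_vpart | move=> w vw].
have := minus0 v (J w) vv (vpartJ vw).
by rewrite omega_minusJ /omega_comm ipJl !ip_jmap //; [lra | apply: vpartJ].
Qed.

Lemma in_u_shift z :
  in_u (fun v => j (J z) v - 2^-1 *: commJ J (j z) v) <-> kills_nijenhuis z.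
Proof.
set T := fun v => _.
have T_vpart v : vpart (T v).
  apply: (subspaceB is_subspace_vpart); first exact: jmap_vpart.
  by apply: (subspaceZ is_subspace_vpart); apply: commJ_vpart.
have ip_T v w : vpart w ->
    ip (T v) w = ip (J z) (br v w) + 2^-1 * omega_comm z v w.
  move=> vw; rewrite /T (linearBl ip) (linearZl_LR ip) /= ip_jmap // ip_commJ //.
  by rewrite mulrN opprK.
have T_defect v w : vpart w ->
    ip (T (J v)) w + ip (T v) (J w) = - ip z (nijenhuis v w).
  move=> vw; rewrite !ip_T //; last exact: vpartJ.
  rewrite ip_nijenhuis /omega_minus /omega_comm !JJ (linearNl br) (linearNr br) /=.
  by rewrite !(linearNr ip) /=; lra.
split=> [[_ _ TJ] v w vv vw | kz].
  by apply: oppr_inj; rewrite oppr0 -T_defect // (TJ v vv) ipJl addNr.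
split=> [v _ | v w vv vw | v vv]; first exact: T_vpart.
  rewrite [ip v _]ipC !ip_T // /omega_comm.
  rewrite [br w v]br_antisym [br (J w) v]br_antisym [br w (J v)]br_antisym.
  by rewrite !(linearNr ip) /=; ring.
apply: orth_eq; [exact: T_vpart | exact/vpartJ/T_vpart | move=> w vw].
by have := T_defect v w vw; rewrite (kz v w vv vw) ipJl; lra.
Qed.

Lemma minus_part_jmap z :
  (forall v, vpart v -> minus_part J (j (J z)) v = 2^-1 *: commJ J (j z) v) <->
  kills_nijenhuis z.
Proof.
have defect v w : vpart w ->
    ip (minus_part J (j (J z)) v) w - ip (2^-1 *: commJ J (j z) v) w =
    2^-1 * ip (J z) (nijenhuis v w).
  move=> vw; rewrite /minus_part !(linearZl_LR ip) (linearDl ip) /= ipJl.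
  rewrite !ip_jmap ?ip_commJ //; last exact: vpartJ.
  rewrite ip_nijenhuis /omega_minus /omega_comm JJ !(linearNl ip) /=; ring.
split=> [mp | kz v vv].
  apply/kills_nijenhuisJ => v w vv vw.
  by have := defect v w vw; rewrite mp // subrr; lra.
apply: orth_eq => [||w vw].
- apply: (subspaceZ is_subspace_vpart); apply: (subspaceD is_subspace_vpart).
    exact: jmap_vpart.
  exact/vpartJ/jmap_vpart.
- by apply: (subspaceZ is_subspace_vpart); apply: commJ_vpart.
have := defect v w vw; rewrite ((kills_nijenhuisJ z).2 kz v w vv vw); lra.
Qed.

(* I + T^2 restricted to n', with T = pc \o J. *)
Definition twist y := y + pc (J (pc (J y))).

Lemma twist_linear : linear twist.
Proof.
have pc_lin a u v : pc (a *: u + v) = a *: pc u + pc v.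
  exact: proj_linear is_subspace_comm a u v.
move=> a x y; rewrite /twist (linearP J) pc_lin /= (linearP J) pc_lin /=.
by rewrite scalerDr addrACA.
Qed.

Lemma twist_comm y : comm y -> comm (twist y).
Proof.
by move=> cy; apply: (subspaceD is_subspace_comm cy); apply: (proj_mem is_subspace_comm).
Qed.

Lemma ip_twist x y : comm y -> ip (twist x) y = ip x y - ip (pc (J x)) (pc (J y)).
Proof.
move=> cy; rewrite /twist (linearDl ip) /= (ip_proj is_subspace_comm) // ipJl.
have cpcJx : comm (pc (J x)) := proj_mem is_subspace_comm (J x).
rewrite [ip _ (J y)]ipC -(ip_proj is_subspace_comm (J y) cpcJx).
by rewrite [ip (pc (J y)) _]ipC.
Qed.

Lemma twist_sym x y : comm x -> comm y -> ip (twist x) y = ip x (twist y).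
Proof.
move=> cx cy; rewrite ip_twist // [ip x (twist y)]ipC ip_twist //.
by rewrite [ip y x]ipC [ip (pc (J y)) _]ipC.
Qed.

Lemma twist_kernel r : comm r -> twist r = 0 -> nJ r.
Proof.
move=> cr tr0; have cJr : comm (J r).
  apply: (proj_norm_eq is_subspace_comm); rewrite ip_J.
  by have /esym/eqP := ip_twist r cr; rewrite tr0 linear0l subr_eq0 => /eqP.
split=> //; exists (- J r); split; first exact: (subspaceN is_subspace_comm).
by rewrite linearN /= JJ opprK.
Qed.

Lemma z1_twist z : z1 z -> exists y, comm y /\ z = twist y.
Proof.
move=> [cz z_orth].
apply: (self_adjoint_image is_subspace_comm twist_linear twist_comm twist_sym cz).
by move=> x [cx tx0]; apply: z_orth; apply: twist_kernel.
Qed.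

Lemma omega_minus_pcJ y v w : kills_nijenhuis y -> vpart v -> vpart w ->
  omega_minus y v w = omega_minus (pc (J y)) v (J w).
Proof.
move=> ky vv vw; rewrite omega_minusJ omega_comm_pc.
by have /eqP := ky v w vv vw; rewrite ip_nijenhuis subr_eq0 => /eqP.
Qed.

Lemma omega_minus_twist y v w : (forall z, comm z -> kills_nijenhuis z) ->
  comm y -> vpart v -> vpart w -> omega_minus (twist y) v w = 0.
Proof.
move=> kills_comm cy vv vw; have cpcJy := proj_mem is_subspace_comm (J y).
rewrite omega_minusD (omega_minus_pcJ (kills_comm y cy)) //.
rewrite (omega_minus_pcJ (kills_comm _ cpcJy)) //; last exact: vpartJ.
by rewrite omega_minusJJ addNr.
Qed.

Lemma nJ_J n : nJ n -> nJ (J n).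
Proof.
move=> [cn [y [cy En]]]; split; last by exists n; split.
by rewrite En JJ; apply: (subspaceN is_subspace_comm).
Qed.

Lemma is_subspace_nJ : is_subspace nJ.
Proof.
exact: is_subspace_cap is_subspace_comm (is_subspace_image J_cplx.1 is_subspace_comm).
Qed.

Lemma kills_z1 z :
  (forall z, z1 z -> forall v w, vpart v -> vpart w -> omega_minus z v w = 0) ->
  z1 z -> kills_nijenhuis z.
Proof.
move=> minus0 [cz z_orth] v w vv vw.
have z1_pcJ : z1 (pc (J z)).
  split=> [|n nn]; first exact: (proj_mem is_subspace_comm).
  rewrite (ip_proj is_subspace_comm _ nn.1) ipJl z_orth ?oppr0 //.
  exact: nJ_J.
rewrite ip_nijenhuis -omega_comm_pc -omega_minusJ !minus0 ?subrr //.
exact: vpartJ.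
Qed.

Lemma kills_comm :
  (forall z, z1 z -> forall v w, vpart v -> vpart w -> omega_minus z v w = 0) ->
  (forall z, nJ z -> kills_nijenhuis z) ->
  forall z, comm z -> kills_nijenhuis z.
Proof.
move=> minus0 kills_nJ z cz; pose q := proj nJ z.
have nq : nJ q := proj_mem is_subspace_nJ z.
rewrite -(subrK q z); apply: kills_nijenhuisD; last exact: kills_nJ.
apply: kills_z1 => //; split; last exact: orth_subr_proj is_subspace_nJ z.
by apply: (subspaceB is_subspace_comm) => //; case: nq.
Qed.

Lemma integrable_iff : integrable br J <->
  (forall z, z1 z -> in_u (j z)) /\ (forall z, nJ z -> kills_nijenhuis z).
Proof.
rewrite integrable_kills; split=> [kc | [ju knJ]].
  split=> [z z1z | z [cz _]]; last exact: kc.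
  apply/in_u_jmap => v w vv vw; have [y [cy ->]] := z1_twist z1z.
  exact: omega_minus_twist.
by apply: kills_comm knJ => z /ju /in_u_jmap.
Qed.

Lemma kills_nJ_iff (b : {vspace V}) :
  (forall x, x \in b -> nJ x) ->
  (forall x, nJ x -> exists a c, [/\ a \in b, c \in b & x = a + J c]) ->
  (forall z, nJ z -> kills_nijenhuis z) <-> (forall z, z \in b -> kills_nijenhuis z).
Proof.
move=> b_nJ b_span; split=> [knJ z /b_nJ | kb z /b_span [a [c [ba bc ->]]]].
  exact: knJ.
by apply: kills_nijenhuisD; [|apply/kills_nijenhuisJ]; apply: kb.
Qed.

End TwoStepNilpotent.
End InnerProductSpace.

Theorem mainTheorem12 (R : realType) (V : vectType R)
  (br : V -> V -> V) (J : V -> V) (ip : V -> V -> R) (b : {vspace V}) :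
  lie_bracket br ->
  two_step_nilpotent br ->
  almost_complex J ->
  (forall x, comm br x -> center br (J x)) ->
  inner_product ip ->
  J_compatible J ip ->
  (* b is a subspace of n'_J with orthogonal decomposition n'_J = b (+) J b *)
  (forall x, x \in b -> nJ br J x) ->
  (forall x, nJ br J x -> exists a c, [/\ a \in b, c \in b & x = a + J c]) ->
  (forall a c, a \in b -> c \in b -> ip a (J c) = 0) ->
  let j := jmap br J ip in
  (integrable br J <->
     ((forall z, z1 br J ip z -> in_u br J ip (j z)) /\
      (forall z, z \in b ->
         in_u br J ip (fun v => j (J z) v - 2^-1 *: commJ J (j z) v))))
  /\
  (integrable br J <->
     ((forall z, z1 br J ip z -> in_u br J ip (j z)) /\
      (forall z, z \in b -> forall v, vpart br J ip v ->
         minus_part J (j (J z)) v = 2^-1 *: commJ J (j z) v))).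
Proof.
move=> lie nil cplx Jcomm inner compat b_nJ b_span _ j.
have shift z := in_u_shift inner lie cplx compat z.
have minus z := minus_part_jmap inner lie cplx compat z.
rewrite (integrable_iff inner lie nil cplx Jcomm compat).
rewrite (kills_nJ_iff inner lie cplx compat b_nJ b_span).
split; split=> -[ju kb]; split=> // z bz.
- exact/shift/kb.
- exact/shift/kb.
- exact/minus/kb.
- exact/minus/kb.
Qed.
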